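(* Let $k\ge 2$, $p\in(0,1)$, $q=1-p$, and let $L^{(k)}(z)=\sum_{n\ge 2}L^{(k)}_n(p)z^n$. Then, as formal power series in $z$, $$L^{(k)}(z)=\frac{z\,(kp-(k-1))\,S^{(k)}(p^{k-1}qz)-qz^2\big((2k-1)p-(2k-2)+(k-1)qz\big)}{q^2(1-z)^2}.$$
   Context: For $i\ge 1$, $s^{(k)}_i=\frac{k-1}{ki-1}\binom{ki-1}{i-1}$ and $S^{(k)}(z)=\sum_{i\ge1}s^{(k)}_i z^i$. For $n\ge 2$, $L^{(k)}_n(p)=(p^{k-1}q)^n\frac1q\sum_{j=k}^{(k-1)n} j\,d^{(k)}_{n,j}(1/p)^j$, where for $k\le j\le (k-1)n$, $d^{(k)}_{n,j}=\binom{kn-2-j}{n-2}-\sum_{\ell=1}^{\,n-\lceil j/(k-1)\rceil} s^{(k)}_\ell\binom{k(n-\ell)-1-j}{n-\ell-1}$. *)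

From mathcomp Require Import all_boot all_order all_algebra.
Set Implicit Arguments. Unset Strict Implicit. Unset Printing Implicit Defensive.
Import Order.TTheory GRing.Theory Num.Theory.
Local Open Scope ring_scope.

Section FPS.
Variable R : fieldType.

Definition fps := nat -> R.
Definition fadd (a b : fps) : fps := fun n => a n + b n.
Definition fsub (a b : fps) : fps := fun n => a n - b n.
Definition fscal (c : R) (a : fps) : fps := fun n => c * a n.
Definition fmul (a b : fps) : fps := fun n => \sum_(i < n.+1) a i * b (n - i)%N.
Definition fconst (c : R) : fps := fun n => if n is 0%N then c else 0.
Definition fX : fps := fun n => if n == 1%N then 1 else 0.
Definition fsubst_scale (c : R) (a : fps) : fps := fun n => c ^+ n * a n.

Definition s_coef (k i : nat) : R :=
  (k.-1)%:R / (k * i).-1%:R * ('C((k * i).-1, i.-1))%:R.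
Definition S_ser (k : nat) : fps := fun i => if i is 0%N then 0 else s_coef k i.

Definition ceil_div (j m : nat) : nat := ((j + m.-1) %/ m)%N.

Definition d_coef (k n j : nat) : R :=
  ('C(k * n - 2 - j, n - 2))%:R
  - \sum_(1 <= l < (n - ceil_div j k.-1).+1)
       s_coef k l * ('C(k * (n - l) - 1 - j, n - l - 1))%:R.

Definition L_coef (k : nat) (p : R) (n : nat) : R :=
  let q := 1 - p in
  (p ^+ k.-1 * q) ^+ n / q *
  \sum_(k <= j < (k.-1 * n).+1) j%:R * d_coef k n j * (p^-1) ^+ j.

Definition L_ser (k : nat) (p : R) : fps :=
  fun n => if (n < 2)%N then 0 else L_coef k p n.

End FPS.
Arguments fX {R}.

From mathcomp Require Import all_boot all_order all_algebra.
From mathcomp Require Import zify ring.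
From Stdlib Require Import FunctionalExtensionality.
Import Order.TTheory GRing.Theory Num.Theory.
Local Open Scope ring_scope.
Set Implicit Arguments. Unset Strict Implicit. Unset Printing Implicit Defensive.

(* Write m = k - 1, q = 1 - p and read d_{n,j} backwards through t = mn - j: d_{n,mn-t} is the
   coefficient of x^t in
     D_n(x) = (1-x)^{-(n-1)} - \sum_{1 <= l < n} s_l x^{ml} (1-x)^{-(n-l)}.
   The s_l are Raney numbers, and their Hagen-Rothe convolution shows that D_n is a polynomial of
   degree < m(n-1); directly from the definition, (1-x) D_{n+1} = D_n - s_n x^{mn}.
   As L_n = q^{n-1} (mn D_n(p) - p D_n'(p)), this recurrence and its derivative at x = p give
   L_{n+1} - L_n = (mq - p) q^{n-1} D_{n+1}(p), and one more difference gives
     q^2 (L_{n+2} - 2 L_{n+1} + L_n) = (kp - m) s_{n+1} (p^m q)^{n+1},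
   the coefficient identity behind the generating function. The z^2 and z^3 terms of the
   numerator come from the closed form taking the value m at n = 1, where the series has 0. *)

Section Raney.
Variables (R : comPzRingType) (k : nat).
Hypothesis k_gt0 : (0 < k)%N.

(* The Raney numbers a/(ki+a) C(ki+a, i), written without division. *)
Definition raney (a i : nat) : R :=
  if i is i'.+1 then ('C(k * i + a, i))%:R - k%:R * ('C(k * i + a - 1, i'))%:R
  else 1.

Lemma raney0 i : raney 0 i = (i == 0)%N%:R.
Proof.
case: i => [//|i] /=.
suff -> : 'C(k * i.+1 + 0, i.+1) = (k * 'C(k * i.+1 + 0 - 1, i))%N.
  by rewrite natrM subrr.
apply/eqP; rewrite addn0 subn1 -(eqn_pmul2l (ltn0Sn i)) -mul_bin_diag.
by rewrite mulnCA mulnA.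
Qed.

Lemma raneyS a i :
  raney a.+1 i = raney a i + (if i is i'.+1 then raney (a + k) i' else 0).
Proof.
case: i => [|i]; first by rewrite /= addr0.
rewrite /raney.
have -> : (k * i.+1 + a.+1 - 1 = k * i.+1 + a)%N by lia.
have -> : (k * i.+1 + a.+1 = (k * i.+1 + a).+1)%N by lia.
rewrite binS.
have -> : (k * i + (a + k) = k * i.+1 + a)%N by lia.
case: i => [|i]; first by rewrite !bin0; ring.
have -> : 'C(k * i.+2 + a, i.+1) =
          ('C(k * i.+2 + a - 1, i.+1) + 'C(k * i.+2 + a - 1, i))%N.
  by rewrite -binS; congr 'C(_, _); lia.
rewrite !natrD; ring.
Qed.

Lemma raney_convolution M a b :
  \sum_(i < M.+1) raney a i * ('C(k * (M - i) + b, M - i))%:R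
  = ('C(k * M + a + b, M))%:R.
Proof.
elim: M a => [|M IHM] a.
  by rewrite big_ord_recl big_ord0 /= !bin0 addr0 mulr1.
elim: a => [|a IHa].
  rewrite big_ord_recl big1 ?addr0 => [|i _]; last by rewrite raney0 mul0r.
  by rewrite raney0 mul1r subn0 addn0.
under eq_bigr do rewrite raneyS mulrDl.
rewrite big_split /= IHa big_ord_recl /= mul0r add0r.
under eq_bigr do rewrite /bump /= add1n subSS.
rewrite IHM addnA.
have -> : (k * M + a + k + b = k * M.+1 + a + b)%N by lia.
by rewrite -natrD -binS addnS addSn.
Qed.

End Raney.

Lemma horner_Xderiv (R : comNzRingType) (P : {poly R}) x N : (size P <= N)%N ->
  x * P^`().[x] = \sum_(t < N) t%:R * P`_t * x ^+ t.
Proof.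
case: N => [|N] size_le.
  move: size_le; rewrite leqn0 size_poly_eq0 => /eqP->.
  by rewrite deriv0 horner0 mulr0 big_ord0.
have size_deriv_le : (size P^`() <= N)%N.
  by apply/leq_sizeP => j j_ge; rewrite coef_deriv (leq_sizeP _ _ size_le) ?mul0rn.
rewrite (horner_coef_wide x size_deriv_le) big_ord_recl mul0r mul0r add0r mulr_sumr.
apply: eq_bigr => i _; rewrite coef_deriv -[P`_i.+1 *+ _]mulr_natl exprS /= /bump /=.
by rewrite add1n; ring.
Qed.

Lemma sum_nat_rev (R : nmodType) (g : nat -> R) a b : (a <= b)%N ->
  \sum_(a <= j < b.+1) g j = \sum_(t < b.+1 - a) g (b - t)%N.
Proof.
move=> a_le_b; rewrite big_nat_rev /= -{1}(add0n a) big_addn big_mkord.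
by apply: eq_bigr => i _; congr g; have := ltn_ord i; lia.
Qed.

(* The coefficient of x^t in (1-x)^{-a}. *)
Definition multichoose (a t : nat) : nat :=
  if a is a'.+1 then 'C(a' + t, t) else (t == 0)%N.

Lemma multichoose0 a : multichoose a 0 = 1%N.
Proof. by case: a => [|a] //=; rewrite bin0. Qed.

Lemma multichooseSS a t :
  multichoose a.+1 t.+1 = (multichoose a t.+1 + multichoose a.+1 t)%N.
Proof. by case: a => [|a] /=; rewrite ?add0n ?binn // addSn binS addSnnS. Qed.

Lemma bin_sym N a b : (a + b = N)%N -> 'C(N, a) = 'C(N, b).
Proof. by move=> <-; have := bin_sub (leq_addl a b); rewrite addnK. Qed.

Section Lcoef.
Variables (R : numFieldType) (m : nat).
Hypothesis m_gt0 : (0 < m)%N.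
Local Notation k := m.+1.
Local Notation s := (s_coef R k).

Lemma s_coef_raney l : (0 < l)%N -> s l = raney R k m l.-1.
Proof.
case: l => // l _; rewrite /s_coef /raney -[l.+1.-1]/l -[k.-1]/m.
have -> : ((k * l.+1).-1 = k * l + m)%N by lia.
case: l => [|l]; first by rewrite muln0 add0n bin0 mulr1 divff // pnatr_eq0; lia.
set N := (k * l.+1 + m)%N.
have N_neq0 : N%:R != 0 :> R by rewrite pnatr_eq0 /N; lia.
have -> : (N - 1 = N.-1)%N by lia.
have -> : ('C(N.-1, l))%:R = l.+1%:R * ('C(N, l.+1))%:R / N%:R :> R.
  by rewrite -natrM -mul_bin_diag natrM mulrC mulKf.
rewrite /N natrD natrM in N_neq0 *.
by rewrite -(addn1 m) -(addn1 l) !natrD in N_neq0 *; field.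
Qed.

Lemma s_coef1 : s 1 = 1.
Proof. by rewrite s_coef_raney. Qed.

(* [dterm a t l] is the coefficient of x^t in s_l x^{ml} (1-x)^{-(a-l)}, and [drev n t] the
   coefficient of x^t in D_n. *)
Definition dterm (a t l : nat) : R :=
  if (m * l <= t)%N then s l * (multichoose (a - l) (t - m * l))%:R else 0.

Definition drev (n t : nat) : R :=
  (multichoose n.-1 t)%:R - \sum_(1 <= l < n) dterm n t l.

Lemma drev1 t : drev 1 t = (t == 0)%N%:R.
Proof. by rewrite /drev big_geq // subr0. Qed.

Lemma drev_0 n : (0 < n)%N -> drev n 0 = 1.
Proof.
move=> n_gt0; rewrite /drev multichoose0 big1_seq ?subr0 // => l.
by rewrite mem_index_iota => l_range; rewrite /dterm ifN //; nia.
Qed.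

Lemma dtermSS n t l : (l <= n)%N ->
  dterm n.+1 t.+1 l = dterm n t.+1 l + dterm n.+1 t l.
Proof.
move=> l_le_n; rewrite /dterm; case: (ltngtP (m * l) t.+1) => ml_t.
- have ml_le_t : (m * l <= t)%N by rewrite -ltnS.
  by rewrite ml_le_t (subSn l_le_n) (subSn ml_le_t) multichooseSS natrD mulrDr.
- by rewrite ifN ?addr0 // -ltnNge ltnW.
- by rewrite ifN ?addr0 -?ltnNge -ml_t ?subnn ?multichoose0.
Qed.

Lemma dterm_diag n t : dterm n t n = (t == m * n)%N%:R * s n.
Proof.
rewrite /dterm subnn; case: (ltngtP (m * n) t) => [lt|gt|<-].
- by rewrite /= eqn0Ngt subn_gt0 lt mulr0 mul0r.
- by rewrite mul0r.
- by rewrite subnn mulr1 mul1r.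
Qed.

Lemma drev_rec n t : (0 < n)%N ->
  drev n.+1 t.+1 = drev n t.+1 + drev n.+1 t - (t.+1 == m * n)%N%:R * s n.
Proof.
case: n => // n _.
rewrite /drev -[n.+2.-1]/n.+1 -[n.+1.-1]/n multichooseSS natrD.
rewrite (@eq_big_nat _ _ _ 1 n.+2 (dterm n.+2 t.+1)
  (fun l => dterm n.+1 t.+1 l + dterm n.+2 t l)); last first.
  by move=> l /andP[_ l_lt]; rewrite dtermSS.
by rewrite big_split /= big_nat_recr //= dterm_diag; ring.
Qed.

Lemma drev_vanish n t : (1 < n)%N -> (m * n.-1 <= t)%N -> drev n t = 0.
Proof.
case: n => [|[|M]] // _ t_ge; rewrite /drev -[M.+2.-1]/M.+1 /= big_add1 /= big_mkord.
rewrite (bin_sym (addnC t M)).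
have -> : (M + t = k * M + m + (t - m * M.+1))%N by lia.
rewrite -(@raney_convolution R k (ltn0Sn m)); apply/eqP; rewrite subr_eq0.
apply/eqP/eq_bigr => i _.
have i_le := ltn_ord i.
rewrite /dterm ifT; last by nia.
rewrite s_coef_raney // subSS (subSn (ltnSE i_le)) /=; congr (_ * _%:R).
have -> : (k * (M - i) + (t - m * M.+1) = M - i + (t - m * i.+1))%N by nia.
exact: bin_sym.
Qed.

Lemma ceil_div_leq j x : (ceil_div j m <= x)%N = (j <= x * m)%N.
Proof. by rewrite /ceil_div -ltnS ltn_divLR // mulSn; lia. Qed.

Lemma d_coef_drev n t : (1 < n)%N -> (t < m * n.-1)%N ->
  d_coef R k n (m * n - t) = drev n t.
Proof.
move=> n_gt1 t_lt; rewrite /d_coef /drev -[k.-1]/m.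
set j := (m * n - t)%N.
have -> : (k * n - 2 - j = n - 2 + t)%N by rewrite /j mulSn; lia.
have -> : n.-1 = (n - 2).+1 by lia.
rewrite /= (@bin_sym _ (n - 2) t) //; congr (_ - _).
set c := ceil_div j m.
have c_ge1 : (1 <= c)%N by rewrite ltnNge ceil_div_leq /j; lia.
have c_le : (c <= n)%N by rewrite ceil_div_leq mulnC /j; lia.
have c_le_iff l : (l <= n)%N -> (c <= n - l)%N = (m * l <= t)%N.
  by move=> l_le; rewrite ceil_div_leq /j; apply/idP/idP; nia.
rewrite [RHS](@big_cat_nat _ _ _ (n - c).+1) //=; last by lia.
rewrite [X in _ = _ + X]big1_seq ?addr0 => [|l]; last first.
  rewrite mem_index_iota => l_range; rewrite /dterm ifN //.
  by rewrite -c_le_iff -?ltnNge; lia.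
apply: eq_big_nat => l /andP[l_ge l_lt].
have ml_le : (m * l <= t)%N by rewrite -c_le_iff; lia.
rewrite /dterm ml_le; congr (_ * _%:R).
have -> : (n - l = (n - l - 1).+1)%N by lia.
have -> : (k * (n - l - 1).+1 - 1 - j = n - l - 1 + (t - m * l))%N by rewrite /j; nia.
by rewrite subSS subn0; apply: bin_sym.
Qed.

Definition dpoly (n : nat) : {poly R} := \poly_(t < (m * n.-1).+1) drev n t.

Lemma coef_dpoly n t : (0 < n)%N -> (dpoly n)`_t = drev n t.
Proof.
move=> n_gt0; rewrite coef_poly ltnS; case: leqP => // t_gt.
case: n n_gt0 t_gt => [|[|n]] // _ t_gt; last by rewrite drev_vanish // ltnW.
by rewrite drev1; case: t t_gt.
Qed.

Lemma size_dpoly n : (1 < n)%N -> (size (dpoly n) <= m * n.-1)%N.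
Proof.
by move=> n_gt1; apply/leq_sizeP => t t_ge; rewrite coef_dpoly ?drev_vanish // ltnW.
Qed.

Lemma dpoly1 : dpoly 1 = 1.
Proof. by apply/polyP => t; rewrite coef_dpoly // drev1 coef1. Qed.

Lemma dpoly_rec n : (0 < n)%N ->
  (1 - 'X) * dpoly n.+1 = dpoly n - s n *: 'X^(m * n).
Proof.
move=> n_gt0; apply/polyP => t.
rewrite mulrBl mul1r !coefB coefXM coefZ coefXn !coef_dpoly //.
case: t => [|t] /=; last by rewrite drev_rec //; ring.
by rewrite !drev_0 // eq_sym muln_eq0 !gtn_eqF // mulr0 !subr0.
Qed.

Variable p : R.
Local Notation q := (1 - p).
Hypotheses (p_neq0 : p != 0) (q_neq0 : q != 0).

Lemma horner_dpoly_rec n : (0 < n)%N ->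
  (dpoly n).[p] = q * (dpoly n.+1).[p] + s n * p ^+ (m * n).
Proof.
move=> n_gt0; have /= E := congr1 (horner^~ p) (dpoly_rec n_gt0).
by rewrite !hornerE in E; rewrite E; ring.
Qed.

Lemma horner_Xderiv_dpoly_rec n : (0 < n)%N ->
  p * (dpoly n)^`().[p] = q * (p * (dpoly n.+1)^`().[p]) - p * (dpoly n.+1).[p]
                          + (m * n)%N%:R * s n * p ^+ (m * n).
Proof.
move=> n_gt0; have /= E := congr1 (fun P => p * P^`().[p]) (dpoly_rec n_gt0).
rewrite derivM !derivB derivZ derivXn derivX [1^`()](derivC 1) !hornerE in E.
rewrite hornerMn hornerXn -mulr_natr in E.
have -> : p * (dpoly n)^`().[p] = p * (-1 * (dpoly n.+1).[p] + q * (dpoly n.+1)^`().[p])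
    + (m * n)%N%:R * s n * (p * p ^+ (m * n).-1) by rewrite E; ring.
by rewrite -exprS prednK ?muln_gt0 ?m_gt0 //; ring.
Qed.

Lemma horner_dpoly_sum n : (1 < n)%N ->
  (dpoly n).[p] = \sum_(t < m * n.-1) drev n t * p ^+ t.
Proof.
move=> n_gt1; rewrite (horner_coef_wide p (size_dpoly n_gt1)).
by apply: eq_bigr => t _; rewrite coef_dpoly // ltnW.
Qed.

Lemma horner_Xderiv_dpoly_sum n : (1 < n)%N ->
  p * (dpoly n)^`().[p] = \sum_(t < m * n.-1) t%:R * drev n t * p ^+ t.
Proof.
move=> n_gt1; rewrite (horner_Xderiv p (size_dpoly n_gt1)).
by apply: eq_bigr => t _; rewrite coef_dpoly // ltnW.
Qed.

Lemma L_coef_dpoly n : (1 < n)%N ->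
  L_coef k p n
  = q ^+ n.-1 * ((m * n)%N%:R * (dpoly n).[p] - p * (dpoly n)^`().[p]).
Proof.
move=> n_gt1; rewrite /L_coef horner_dpoly_sum // horner_Xderiv_dpoly_sum //.
have -> : (p ^+ m * q) ^+ n / q = q ^+ n.-1 * p ^+ (m * n).
  by rewrite exprMn -exprM -[in q ^+ n](prednK (ltnW n_gt1)) exprS; field.
rewrite -mulrA; congr (_ * _).
rewrite sum_nat_rev; last by nia.
have -> : ((m * n).+1 - k = m * n.-1)%N by case: n n_gt1 => // n; rewrite mulnS; lia.
rewrite mulr_sumr mulr_sumr -sumrB; apply: eq_bigr => t _.
have t_lt := ltn_ord t.
rewrite d_coef_drev // natrB; last by nia.
have -> : p ^+ (m * n) = p ^+ t * p ^+ (m * n - t) by rewrite -exprD subnKC //; nia.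
by rewrite exprVn; field; rewrite expf_neq0.
Qed.

(* The closed form of [L_coef] given by [L_coef_dpoly]; unlike [L_ser], it is m at n = 1. *)
Definition L_ext (n : nat) : R :=
  q ^+ n.-1 * ((m * n)%N%:R * (dpoly n).[p] - p * (dpoly n)^`().[p]).

Lemma L_ext1 : L_ext 1 = m%:R.
Proof.
by rewrite /L_ext dpoly1 derivC horner0 hornerC muln1 mulr1 mulr0 subr0 mul1r.
Qed.

Lemma L_extS n :
  L_ext n.+2 - L_ext n.+1 = (m%:R * q - p) * q ^+ n * (dpoly n.+2).[p].
Proof.
rewrite /L_ext (horner_Xderiv_dpoly_rec (ltn0Sn n)) (horner_dpoly_rec (ltn0Sn n)) /=.
rewrite !natrM !exprS; ring.
Qed.

Lemma L_ext_diff2 n :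
  q ^+ 2 * (L_ext n.+3 - 2 * L_ext n.+2 + L_ext n.+1)
  = (k%:R * p - m%:R) * ((p ^+ m * q) ^+ n.+2 * s n.+2).
Proof.
have -> : L_ext n.+3 - 2 * L_ext n.+2 + L_ext n.+1
          = (L_ext n.+3 - L_ext n.+2) - (L_ext n.+2 - L_ext n.+1) by ring.
rewrite !L_extS (horner_dpoly_rec (ltn0Sn n.+1)) exprMn -exprM !exprS.
rewrite -(addn1 m) natrD; ring.
Qed.

Lemma L_ser_small n : (n < 2)%N -> L_ser k p n = 0.
Proof. by rewrite /L_ser => ->. Qed.

Lemma L_serSS n : L_ser k p n.+2 = L_ext n.+2.
Proof. by rewrite /L_ser ltnS ltnNge ltnS leq0n L_coef_dpoly. Qed.

Lemma L_ser_diff2 n :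
  q ^+ 2 * (L_ser k p n.+2 - 2 * L_ser k p n.+1 + L_ser k p n)
  = (k%:R * p - m%:R) * ((p ^+ m * q) ^+ n.+1 * s n.+1)
    - q * match n with
          | 0 => (2 * m).+1%N%:R * p - (2 * m)%N%:R
          | 1 => m%:R * q
          | _ => 0
          end.
Proof.
case: n => [|[|n]]; rewrite !L_serSS ?L_ser_small //.
- have U2 : (dpoly 2).[p] = (1 - p ^+ m) / q.
    have := horner_dpoly_rec (ltn0Sn 0); rewrite dpoly1 hornerC s_coef1 muln1 mul1r => E.
    apply: (mulfI q_neq0); rewrite mulrCA divff // mulr1.
    by apply/eqP; rewrite eq_sym subr_eq -E.
  rewrite -[L_ext 2](subrK (L_ext 1)) L_extS L_ext1 U2 s_coef1.
  by rewrite -(addn1 (2 * m)) -(addn1 m) !natrD; field.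
- by rewrite -L_ext_diff2 L_ext1; ring.
- by rewrite L_ext_diff2 mulr0 subr0.
Qed.

End Lcoef.

Section PowerSeries.
Variable R : fieldType.
Implicit Types (a b : fps R) (c : R).

Definition fshift a : fps R := fun n => if n is n'.+1 then a n' else 0.

Lemma fmulC a b : fmul a b = fmul b a.
Proof.
apply: functional_extensionality => n; rewrite /fmul (reindex_inj rev_ord_inj) /=.
by apply: eq_bigr => i _; rewrite subSS subKn ?(ltnSE (ltn_ord i)) // mulrC.
Qed.

Lemma fmul_shiftl a b : fmul (fshift a) b = fshift (fmul a b).
Proof.
by apply: functional_extensionality => -[|n];
  rewrite /fmul big_ord_recl /= ?big_ord0 mul0r ?add0r.
Qed.

Lemma fmul1l a : fmul (fconst 1) a = a.
Proof.
apply: functional_extensionality => n; rewrite /fmul big_ord_recl big1 /= => [|i _].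
  by rewrite mul1r subn0 addr0.
by rewrite mul0r.
Qed.

Lemma fX_fshift : fX = fshift (fconst 1).
Proof. by apply: functional_extensionality => -[|[|n]]. Qed.

Lemma fmulX a : fmul fX a = fshift a.
Proof. by rewrite fX_fshift fmul_shiftl fmul1l. Qed.

Lemma fmulZl c a b : fmul (fscal c a) b = fscal c (fmul a b).
Proof.
apply: functional_extensionality => n; rewrite /fmul /fscal mulr_sumr.
by apply: eq_bigr => i _; rewrite mulrA.
Qed.

Lemma fmulZr c a b : fmul a (fscal c b) = fscal c (fmul a b).
Proof. by rewrite fmulC fmulZl fmulC. Qed.

Lemma fmul_quadratic a b : (forall i, (2 < i)%N -> b i = 0) ->
  fmul a b = fun n => b 0%N * a n + b 1%N * fshift a n + b 2%N * fshift (fshift a) n.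
Proof.
move=> b_quad; apply: functional_extensionality => n; rewrite fmulC /fmul.
case: n => [|[|n]].
- by rewrite big_ord_recl big_ord0 /= !mulr0 !addr0.
- by rewrite !big_ord_recl big_ord0 /= mulr0 !addr0.
rewrite !big_ord_recl big1 => [|i _]; last by rewrite b_quad ?mul0r.
by rewrite /= /bump /= subn0 subn1 subn2 addr0 addrA.
Qed.

Lemma fmul_sqr_1subX i :
  fmul (fsub (fconst 1) fX) (fsub (fconst 1) fX) i = [:: 1; -2; 1]`_i :> R.
Proof.
rewrite /fmul /fsub /fconst /fX.
case: i => [|[|[|i]]]; rewrite !big_ord_recl ?big_ord0 /=; try ring.
rewrite big1 => [|j _]; last by rewrite subrr mul0r.
by rewrite !subrr !(mul0r, mulr0) !addr0 nth_nil.
Qed.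

Lemma fadd_fconst_fscalX c0 c1 n :
  fadd (fconst c0) (fscal c1 fX) n
  = match n with 0 => c0 | 1 => c1 | _ => 0 end.
Proof.
by case: n => [|[|n]]; rewrite /fadd /fconst /fscal /fX /= ?mulr0 ?mulr1 ?addr0 ?add0r.
Qed.

End PowerSeries.

Theorem lemma3p2 (R : realFieldType) (k : nat) (p : R) :
  (2 <= k)%N -> 0 < p -> p < 1 ->
  let q := 1 - p in
  fmul (L_ser k p)
       (fscal (q ^+ 2) (fmul (fsub (fconst 1) fX) (fsub (fconst 1) fX)))
  = fsub
      (fmul fX (fscal (k%:R * p - (k.-1)%:R)
                      (fsubst_scale (p ^+ k.-1 * q) (S_ser R k))))
      (fmul (fscal q (fmul fX fX))
            (fadd (fconst ((2 * k).-1%:R * p - (2 * k - 2)%:R))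
                  (fscal (k.-1%:R * q) fX))).
Proof.
move=> k_ge2 p_gt0 p_lt1 q.
case: k k_ge2 => [|m] //; rewrite ltnS => m_gt0.
have p_neq0 : p != 0 by rewrite gt_eqF.
have q_neq0 : q != 0 by rewrite subr_eq0 eq_sym lt_eqF.
have -> : (2 * m.+1).-1 = (2 * m).+1 by lia.
have -> : (2 * m.+1 - 2 = 2 * m)%N by lia.
rewrite fmulZr fmulZl !fmulX fmul_shiftl fmulX.
rewrite (fmul_quadratic (L_ser _ _)) => [|i i_gt2]; last first.
  by rewrite fmul_sqr_1subX nth_default.
apply: functional_extensionality => -[|[|n]]; rewrite /fsub /fscal !fmul_sqr_1subX /=.
- by rewrite L_ser_small //; ring.
- by rewrite !L_ser_small // /fsubst_scale /S_ser; ring.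
by rewrite fadd_fconst_fscalX /fsubst_scale /S_ser -L_ser_diff2 // /q; ring.
Qed.
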